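(* For every integer $d\ge 1$ there exist $q_0=q_0(d)>\frac{1}{d+1}$ and constants $c_1,c_2>0$ depending only on $d$ such that the following holds. If $G=(V,E)$ is a finite connected simple graph of maximal degree $d$, $p\in(0,1)$ and $q:=1-p\le q_0$, then the stationary distribution $\pi$ of the Bak–Sneppen model on $G$ with parameter $p$ satisfies, for every $k\ge 0$, \[ \pi\big(\eta:\ |\{x\in V:\eta_x=0\}|>k\big)\le c_1e^{-c_2k}. \]
   Context: Let $G=(V,E)$ be a finite connected simple graph (no loops, no multiple edges) and $p\in(0,1)$. The (continuous-time, discrete-valued) Bak–Sneppen model on $G$ with parameter $p$ is the continuous-time Markov process $\eta(t)\in\{0,1\}^V$ defined as follows. Each vertex $x$ carries an independent rate-$1$ Poisson clock. When the clock at $x$ rings: if $\eta_x=0$, or if $\eta_y=1$ for all $y\in V$, then the values $\eta_z$ for all $z$ in the neighbourhood $\{x\}\cup\{y:y\sim x\}$ are replaced by independent Bernoulli$(p)$ random variables (value $1$ with probability $p$, value $0$ with probability $q=1-p$); otherwise nothing happens. This is an irreducible finite Markov chain; $\pi$ is its stationary distribution. *)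

From HB Require Import structures.
From mathcomp Require Import all_boot all_order all_algebra.
From mathcomp Require Import reals.
From mathcomp Require Import sequences.
From mathcomp.analysis Require Import exp.
Set Implicit Arguments. Unset Strict Implicit. Unset Printing Implicit Defensive.
Import Order.TTheory GRing.Theory Num.Theory.
Local Open Scope ring_scope.

Definition simple_graph (V : finType) (e : rel V) : Prop :=
  symmetric e /\ irreflexive e.

Definition connected_graph (V : finType) (e : rel V) : Prop :=
  forall x y : V, connect e x y.

Definition max_degree (V : finType) (e : rel V) : nat :=
  (\max_(x : V) #|[set y | e x y]|)%N.

Definition cnbhd (V : finType) (e : rel V) (x : V) : {set V} :=
  [set z | (z == x) || e x z].

Definition bs_active (V : finType) (eta : {ffun V -> bool}) (x : V) : bool :=
  ~~ eta x || [forall y, eta y].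

Definition bs_rate (R : realType) (V : finType) (e : rel V) (p : R)
  (eta xi : {ffun V -> bool}) : R :=
  \sum_(x : V)
    if bs_active eta x && [forall z, (z \notin cnbhd e x) ==> (xi z == eta z)]
    then \prod_(z in cnbhd e x) (if xi z then p else 1 - p)
    else 0.

Definition bs_stationary (R : realType) (V : finType) (e : rel V) (p : R)
  (pi : {ffun {ffun V -> bool} -> R}) : Prop :=
  (forall eta, 0 <= pi eta) /\
  \sum_(eta : {ffun V -> bool}) pi eta = 1 /\
  forall xi : {ffun V -> bool},
    \sum_(eta : {ffun V -> bool}) pi eta * bs_rate e p eta xi =
    pi xi * \sum_(eta : {ffun V -> bool}) bs_rate e p xi eta.

From HB Require Import structures.
From mathcomp Require Import all_boot all_order all_algebra.
From mathcomp Require Import reals.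
From mathcomp Require Import sequences.
From mathcomp.analysis Require Import exp.
From mathcomp Require Import ring lra.
Import Order.TTheory GRing.Theory Num.Theory.
Local Open Scope ring_scope.
Set Implicit Arguments. Unset Strict Implicit.

(* Let Psi = 2(d+1) N0 - P, where N0 counts the zeros and P the ordered pairs
   of adjacent zeros.  When the clock of a zero x rings, the closed
   neighbourhood of x is resampled: N0 changes in expectation by
   q(deg x + 1) - (1 + #zero neighbours of x), and P grows by at least
   2 q^2 deg x minus twice the number of zero pairs at distance <= 1 from x.
   Summed over the zeros, these pair terms are absorbed by the -P part of Psi,
   and what remains is a per-vertex coefficient 2(d+1)(q(k+1) - 1) - 2 q^2 k
   (k = deg x) which stays below some -delta < 0 for q up to a threshold
   q0 > 1/(d+1).  A jump changes Psi by a bounded amount, so f = exp(theta Psi)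
   with theta small has generator at most -(theta delta / 2) N0 f, except at the
   all-ones configuration, where f is replaced by a large constant.  Since the
   stationary expectation of the generator vanishes, E_pi[N0 f] is bounded, and
   Markov's inequality with f >= exp(theta N0) gives the exponential tail. *)

Lemma sum_ffun_agree_off (R : comNzRingType) (V U : finType) (S : {set V})
    (eta : {ffun V -> U}) (F : V -> U -> R) :
  \sum_(xi : {ffun V -> U})
     (if [forall z, (z \notin S) ==> (xi z == eta z)]
      then \prod_(z in S) F z (xi z) else 0)
  = \prod_(z in S) \sum_c F z c.
Proof.
pose K i j := if i \in S then F i j else (j == eta i)%:R.
have := @bigA_distr_bigA R 0 1 *%R +%R V U K.
have -> : \prod_i \sum_j K i j = \prod_(z in S) \sum_c F z c.
  rewrite [RHS]big_mkcond; apply: eq_bigr => i _; rewrite /K.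
  case: (i \in S) => //; rewrite (bigD1 (eta i)) //= eqxx big1 ?addr0 // => j.
  by move=> /negbTE ->.
move=> ->; apply: eq_bigr => xi _; rewrite [RHS](bigID (mem S)) /=.
rewrite [X in _ = X * _](eq_bigr (fun z => F z (xi z))) => [|z zS]; last by rewrite /K zS.
case: forallP => [agree|].
  rewrite [X in _ * X]big1 ?mulr1 // => z zS; rewrite /K (negbTE zS).
  by have := agree z; rewrite zS => /eqP ->; rewrite eqxx.
move=> /forallP; rewrite negb_forall => /existsP [z]; rewrite negb_imply => /andP [zS ne].
by rewrite [X in _ * X](bigD1 z) //= /K (negbTE zS) (negbTE ne) mul0r mulr0.
Qed.

Lemma balance_generator_sum0 (R : comNzRingType) (T : finType)
    (Q : T -> T -> R) (pi h : T -> R) :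
  (forall y, \sum_x pi x * Q x y = pi y * \sum_x Q y x) ->
  \sum_x pi x * \sum_y Q x y * (h y - h x) = 0.
Proof.
move=> balance.
have -> : \sum_x pi x * \sum_y Q x y * (h y - h x) =
    \sum_y \sum_x pi x * Q x y * h y - \sum_x h x * (pi x * \sum_y Q x y).
  rewrite exchange_big -sumrB; apply: eq_bigr => x _.
  by rewrite !mulr_sumr -sumrB; apply: eq_bigr => y _; ring.
rewrite -sumrB big1 // => y _.
by rewrite -balance mulr_sumr -sumrB big1 // => x _; ring.
Qed.

Lemma sum_sym_weight (R : comNzRingType) (T : finType) (c : T -> R) (W : T -> T -> R) :
  (forall u v, W u v = W v u) ->
  \sum_u \sum_v (c u + c v) * W u v = 2 * \sum_u c u * \sum_v W u v.
Proof.
move=> W_sym.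
have -> : \sum_u \sum_v (c u + c v) * W u v =
    \sum_u \sum_v c u * W u v + \sum_u \sum_v c v * W u v.
  rewrite -big_split; apply: eq_bigr => u _.
  by rewrite -big_split; apply: eq_bigr => v _; rewrite mulrDl.
rewrite [X in _ + X]exchange_big mulr2n mulrDl mul1r /=.
congr (_ + _); apply: eq_bigr => u _; rewrite mulr_sumr //.
by apply: eq_bigr => v _; rewrite W_sym.
Qed.

Lemma sum_le_markov (R : realFieldType) (T : finType) (P : pred T)
    (pi W : T -> R) (m : R) :
  0 < m -> (forall x, 0 <= pi x) -> (forall x, 0 <= W x) ->
  (forall x, P x -> m <= W x) ->
  \sum_(x | P x) pi x <= m^-1 * \sum_x pi x * W x.
Proof.
move=> m_gt0 pi_ge0 W_ge0 W_ge; rewrite mulr_sumr.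
apply: le_trans (_ : _ <= \sum_(x | P x) m^-1 * (pi x * W x)) _.
  apply: ler_sum => x Px; rewrite mulrCA -[X in X <= _]mulr1 ler_wpM2l //.
  by rewrite ler_pdivlMl // mulr1 W_ge.
rewrite [X in _ <= X](bigID P) /= lerDl.
by apply: sumr_ge0 => x _; rewrite !mulr_ge0 // invr_ge0 ltW.
Qed.

Lemma expR_le_quadratic (R : realType) (t : R) :
  t <= 1 / 2 -> expR t <= 1 + t + 2 * t ^+ 2.
Proof.
move=> t_le; have Dt_gt0 : 0 < 1 - t by lra.
rewrite -[expR t]invrK -expRN; apply: le_trans (_ : (1 - t)^-1 <= _).
  by rewrite lef_pV2 ?posrE ?expR_gt0 // -[1 - t]/(1 + - t) expR_ge1Dx.
rewrite -[X in X <= _]div1r ler_pdivrMr //.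
have : 0 <= t ^+ 2 * (1 - 2 * t) by rewrite mulr_ge0 ?sqr_ge0 //; lra.
by rewrite expr2; nra.
Qed.

Lemma quadratic_absorb (R : realFieldType) (n F c th b : R) :
  0 <= n -> 0 < c -> 0 < th -> 1 + th * n <= F ->
  c / 2 * (n * F) - b ^+ 2 / (2 * c * th) <= n * (c * F - b).
Proof.
move=> n_ge0 c_gt0 th_gt0 F_ge.
have sq : 0 <= c * th / 2 * n ^+ 2 - b * n + b ^+ 2 / (2 * c * th).
  have -> : c * th / 2 * n ^+ 2 - b * n + b ^+ 2 / (2 * c * th)
            = (c * th * n - b) ^+ 2 / (2 * c * th).
    by field; rewrite !gt_eqF.
  by rewrite divr_ge0 ?sqr_ge0 // !mulr_ge0 // ltW.
have : c / 2 * (n * (1 + th * n)) <= c / 2 * (n * F).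
  by rewrite ler_wpM2l ?ler_wpM2l // divr_ge0 // ltW.
by move: sq; rewrite expr2; nra.
Qed.

Lemma drift_coef_le (R : realFieldType) (D q k : R) :
  1 <= D -> 0 <= q <= D^-1 + (D - 1) / D ^+ 2 / (2 * D ^+ 2) ->
  0 <= k <= D - 1 ->
  2 * D * (q * (k + 1) - 1) - 2 * (q ^+ 2 * k) <= - ((D - 1) / D ^+ 2).
Proof.
move=> D_ge1 /andP [q_ge0 q_le] /andP [k_ge0 k_le].
have D_neq0 : D != 0 by rewrite gt_eqF //; lra.
set dl := (D - 1) / D ^+ 2 in q_le *; set q0 := D^-1 + _ in q_le.
have [i Di] : exists i, D^-1 = i by exists D^-1.
have iD : D * i = 1 by rewrite -Di divff.
have i_gt0 : 0 < i by rewrite -Di invr_gt0; lra.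
have dlE : dl = (1 - i) * i by rewrite /dl -Di; field.
have q0E : q0 = i + dl * i ^+ 2 / 2 by rewrite /q0 -Di; field.
have dl_ge0 : 0 <= dl by rewrite dlE; nra.
have dl_le : dl <= i by rewrite dlE; nra.
have i_le1 : i <= 1 by nra.
have q0_le1 : q0 <= 1.
  have : dl * i ^+ 2 <= dl by rewrite -[X in _ <= X]mulr1 ler_wpM2l // expr2; nra.
  have : dl <= 1 - i by rewrite dlE; nra.
  by rewrite q0E; lra.
(* The left side is nondecreasing in k and in q on this range; at k = D - 1
   and q = q0 it equals dl - 2 q0^2 (D - 1) <= - dl. *)
have mono_k : 2 * D * (q * (k + 1) - 1) - 2 * (q ^+ 2 * k)
              <= 2 * D * (q * D - 1) - 2 * (q ^+ 2 * (D - 1)).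
  have : 0 <= (D - 1 - k) * (2 * q * (D - q)) by rewrite mulr_ge0 ?mulr_ge0 //; lra.
  by rewrite expr2; nra.
have mono_q : 2 * D * (q * D - 1) - 2 * (q ^+ 2 * (D - 1))
              <= 2 * D * (q0 * D - 1) - 2 * (q0 ^+ 2 * (D - 1)).
  have : 0 <= (q0 - q) * (2 * D * D - 2 * (D - 1) * (q0 + q)).
    by rewrite mulr_ge0 //; [lra | nra].
  by rewrite !expr2; nra.
have at_q0 : 2 * D * (q0 * D - 1) = dl.
  by rewrite q0E dlE -Di; field.
have q0_ge : i ^+ 2 <= q0 ^+ 2.
  by rewrite q0E ler_sqr ?nnegrE; nra.
have : dl <= q0 ^+ 2 * (D - 1).
  have -> : dl = i ^+ 2 * (D - 1) by rewrite /dl -Di; field.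
  by rewrite ler_wpM2r //; lra.
lra.
Qed.

Section Constants.
Variables (R : realType) (d : nat).
Hypothesis d_gt0 : (0 < d)%N.
Local Notation D := ((d.+1)%:R : R).

Definition drift_gap : R := d%:R / D ^+ 2.
Definition q_crit : R := D^-1 + drift_gap / (2 * D ^+ 2).
Definition jump_bound : R := 2 * D ^+ 2 + 2 * (D * d%:R).
Definition exp_rate : R := drift_gap / (4 * jump_bound ^+ 2).
Definition all_ones_value : R := expR (exp_rate * (2 * D ^+ 2)).
Definition decay_const : R := exp_rate * drift_gap / 2.
Definition moment_const : R := (all_ones_value - 1) ^+ 2 / (2 * decay_const * exp_rate).
Definition tail_const : R := 2 * moment_const / decay_const.

Let D_ge2 : 2 <= D.
Proof. by rewrite ler_nat ltnS. Qed.

Let dE : d%:R = D - 1 :> R.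
Proof. by rewrite -natr1 addrK. Qed.

Lemma drift_gap_gt0 : 0 < drift_gap.
Proof. by rewrite divr_gt0 ?exprn_gt0 ?ltr0n. Qed.

Lemma drift_gap_le1 : drift_gap <= 1.
Proof.
rewrite ler_pdivrMr ?exprn_gt0 // mul1r dE expr2.
by have := D_ge2; nra.
Qed.

Lemma q_crit_gt : 1 / (d%:R + 1) < q_crit.
Proof.
rewrite natr1 div1r /q_crit ltrDl divr_gt0 ?drift_gap_gt0 //.
by rewrite mulr_gt0 ?exprn_gt0.
Qed.

Lemma jump_bound_ge1 : 1 <= jump_bound.
Proof.
rewrite /jump_bound; have := D_ge2; have : 0 <= d%:R :> R by [].
by rewrite expr2; nra.
Qed.

Lemma exp_rate_gt0 : 0 < exp_rate.
Proof.
rewrite divr_gt0 ?drift_gap_gt0 // mulr_gt0 // exprn_gt0 //.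
by have := jump_bound_ge1; lra.
Qed.

Lemma exp_rate_jump_le : exp_rate * jump_bound <= 1 / 2.
Proof.
have M_ge1 := jump_bound_ge1; have gap_le1 := drift_gap_le1.
have -> : exp_rate * jump_bound = drift_gap / (4 * jump_bound).
  by rewrite /exp_rate; field; rewrite gt_eqF //; lra.
rewrite ler_pdivrMr; last by rewrite mulr_gt0 //; lra.
lra.
Qed.

Lemma exp_rate_jump_sqr : 2 * (exp_rate * jump_bound) ^+ 2 = decay_const.
Proof.
have := jump_bound_ge1; rewrite /decay_const /exp_rate => M_ge1.
by field; rewrite gt_eqF //; lra.
Qed.

Lemma decay_const_gt0 : 0 < decay_const.
Proof. by rewrite divr_gt0 // mulr_gt0 ?exp_rate_gt0 ?drift_gap_gt0. Qed.

Lemma all_ones_value_ge1 : 1 <= all_ones_value.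
Proof.
apply: le_trans (expR_ge1Dx _); rewrite lerDl.
by apply: mulr_ge0; [exact: ltW exp_rate_gt0 | rewrite mulr_ge0 ?exprn_ge0].
Qed.

Lemma moment_const_gt0 : 0 < moment_const.
Proof.
apply: divr_gt0; last first.
  by rewrite mulr_gt0 ?exp_rate_gt0 // mulr_gt0 ?decay_const_gt0.
rewrite exprn_gt0 // subr_gt0 -expR0 ltr_expR mulr_gt0 ?exp_rate_gt0 //.
by rewrite mulr_gt0 ?exprn_gt0.
Qed.

Lemma tail_const_gt0 : 0 < tail_const.
Proof.
by apply: divr_gt0; [apply: mulr_gt0 => //; apply: moment_const_gt0 | apply: decay_const_gt0].
Qed.

Lemma drift_coef_le_gap (q k : R) : 0 <= q <= q_crit -> 0 <= k <= d%:R ->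
  2 * D * (q * (k + 1) - 1) - 2 * (q ^+ 2 * k) <= - drift_gap.
Proof.
rewrite /q_crit /drift_gap dE => hq hk; apply: drift_coef_le => //.
by have := D_ge2; lra.
Qed.

End Constants.

Section BakSneppen.
Variables (R : realType) (V : finType) (e : rel V) (d : nat) (p : R).
Hypotheses (e_sym : symmetric e) (e_irr : irreflexive e).
Hypothesis card_nbrs_le : forall x, (#|[set y | e x y]| <= d)%N.
Hypothesis d_gt0 : (0 < d)%N.
Hypotheses (p_gt0 : 0 < p) (p_lt1 : p < 1).
Hypothesis q_le_crit : 1 - p <= q_crit R d.
Local Notation cfg := {ffun V -> bool}.
Local Notation q := (1 - p).
Local Notation D := ((d.+1)%:R : R).

Definition bern (c : bool) : R := if c then p else q.

Definition agree_off (S : {set V}) (eta xi : cfg) : Prop :=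
  forall z, z \notin S -> xi z = eta z.

Definition resample (x : V) (eta xi : cfg) : R :=
  if [forall z, (z \notin cnbhd e x) ==> (xi z == eta z)]
  then \prod_(z in cnbhd e x) bern (xi z) else 0.

Definition zero_ind (eta : cfg) (z : V) : R := (~~ eta z)%:R.

Lemma bs_rateE eta xi :
  bs_rate e p eta xi = \sum_x if bs_active eta x then resample x eta xi else 0.
Proof. by apply: eq_bigr => x _; rewrite /resample; case: bs_active. Qed.

Lemma bern_ge0 c : 0 <= bern c.
Proof. by have := p_gt0; have := p_lt1; rewrite /bern; case: c; lra. Qed.

Lemma resample_ge0 x eta xi : 0 <= resample x eta xi.
Proof.
by rewrite /resample; case: forallP => // _; apply: prodr_ge0 => z _; apply: bern_ge0.
Qed.

Lemma resample_agree_off x eta xi :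
  resample x eta xi != 0 -> agree_off (cnbhd e x) eta xi.
Proof.
rewrite /resample; case: forallP => [agree _ z zS|]; last by rewrite eqxx.
by have := agree z; rewrite zS => /eqP.
Qed.

Lemma ler_sum_resample x eta (F G : cfg -> R) :
  (forall xi, agree_off (cnbhd e x) eta xi -> F xi <= G xi) ->
  \sum_xi resample x eta xi * F xi <= \sum_xi resample x eta xi * G xi.
Proof.
move=> FG; apply: ler_sum => xi _.
have [->|/resample_agree_off/FG le] := eqVneq (resample x eta xi) 0.
  by rewrite !mul0r.
by rewrite ler_wpM2l ?resample_ge0.
Qed.

Lemma eq_sum_resample x eta (F G : cfg -> R) :
  (forall xi, agree_off (cnbhd e x) eta xi -> F xi = G xi) ->
  \sum_xi resample x eta xi * F xi = \sum_xi resample x eta xi * G xi.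
Proof.
move=> FG; apply/eqP; rewrite eq_le !ler_sum_resample // => xi /FG ->//.
Qed.

Lemma zero_ind_ge0 eta z : 0 <= zero_ind eta z.
Proof. by rewrite /zero_ind; case: (eta z). Qed.

Lemma zero_ind_le1 eta z : zero_ind eta z <= 1.
Proof. by rewrite /zero_ind; case: (eta z). Qed.

Lemma sum_resample_prod_zero x eta (T : {set V}) : T \subset cnbhd e x ->
  \sum_xi resample x eta xi * \prod_(z in T) zero_ind xi z = q ^+ #|T|.
Proof.
move=> sub_T.
pose F z c := bern c * (if z \in T then (~~ c)%:R else 1).
have := sum_ffun_agree_off (cnbhd e x) eta F.
have -> : \prod_(z in cnbhd e x) \sum_c F z c = q ^+ #|T|.
  rewrite -prodr_const (big_setID T) /= (setIidPr sub_T) [X in _ * X]big1 ?mulr1.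
    by apply: eq_bigr => z zT; rewrite big_bool /F zT /=; ring.
  by move=> z; rewrite inE => /andP [/negbTE zT _]; rewrite big_bool /F zT /=; ring.
move=> <-; apply: eq_bigr => xi _; rewrite /resample; case: forallP => _.
  rewrite /F big_split /=; congr (_ * _).
  by rewrite -big_mkcondr; apply: eq_bigl => z; rewrite andb_idl // => /(subsetP sub_T).
by rewrite mul0r.
Qed.

Lemma sum_resample x eta : \sum_xi resample x eta xi = 1.
Proof.
rewrite -(expr0 q) -(cards0 V) -(sum_resample_prod_zero eta (sub0set (cnbhd e x))).
by apply: eq_bigr => xi _; rewrite big_set0 mulr1.
Qed.

Lemma sum_resample_zero x eta y : y \in cnbhd e x ->
  \sum_xi resample x eta xi * zero_ind xi y = q.
Proof.
rewrite -sub1set => /(sum_resample_prod_zero eta); rewrite cards1 expr1 => <-.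
by apply: eq_bigr => xi _; rewrite big_set1.
Qed.

Lemma sum_resample_zero2 x eta y y' : y \in cnbhd e x -> y' \in cnbhd e x ->
  y != y' -> \sum_xi resample x eta xi * (zero_ind xi y * zero_ind xi y') = q ^+ 2.
Proof.
move=> yN y'N neq; have : [set y; y'] \subset cnbhd e x.
  by apply/subsetP => z; rewrite in_set2 => /orP [] /eqP ->.
move/(sum_resample_prod_zero eta); rewrite cards2 neq => <-.
by apply: eq_bigr => xi _; rewrite big_setU1 ?big_set1 // inE.
Qed.

Definition nzeros (eta : cfg) : R := \sum_z zero_ind eta z.
Definition deg (u : V) : R := \sum_v (e u v)%:R.
Definition zdeg (eta : cfg) (u : V) : R := \sum_v (e u v)%:R * zero_ind eta v.
Definition zpairs (eta : cfg) : R := \sum_u zero_ind eta u * zdeg eta u.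
Definition nbhd_zpairs (x : V) (eta : cfg) : R :=
  \sum_(u in cnbhd e x) zero_ind eta u * zdeg eta u.
Definition zpairs_touching (T : {set V}) (eta : cfg) : R :=
  \sum_u \sum_v ((u \in T) || (v \in T))%:R
                * ((e u v)%:R * (zero_ind eta u * zero_ind eta v)).

Lemma sum_indicator (P : pred V) (F : V -> R) :
  \sum_u (P u)%:R * F u = \sum_(u | P u) F u.
Proof.
rewrite [RHS]big_mkcond; apply: eq_bigr => u _.
by case: (P u); rewrite ?mul1r ?mul0r.
Qed.

Lemma card_sum_indicator (T : {set V}) : #|T|%:R = \sum_u (u \in T)%:R :> R.
Proof.
rewrite -sum1_card natr_sum -(sum_indicator (mem T)).
by apply: eq_bigr => u _; rewrite mulr1.
Qed.

Lemma nzerosE (eta : cfg) : #|[set x | ~~ eta x]|%:R = nzeros eta.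
Proof. by rewrite card_sum_indicator; apply: eq_bigr => z _; rewrite inE. Qed.

Lemma degE u : deg u = #|[set v | e u v]|%:R.
Proof. by rewrite card_sum_indicator; apply: eq_bigr => v _; rewrite inE. Qed.

Lemma deg_ge0 u : 0 <= deg u.
Proof. by rewrite degE. Qed.

Lemma deg_le u : deg u <= d%:R.
Proof. by rewrite degE ler_nat. Qed.

Lemma cnbhdE x : cnbhd e x = x |: [set y | e x y].
Proof. by apply/setP => z; rewrite !inE. Qed.

Lemma card_cnbhd x : #|cnbhd e x|%:R = deg x + 1.
Proof. by rewrite cnbhdE cardsU1 inE e_irr degE natrD addrC. Qed.

Lemma card_cnbhd_le x : #|cnbhd e x|%:R <= D.
Proof. by rewrite card_cnbhd -natr1 lerD2r deg_le. Qed.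

Lemma sum_cnbhd x (F : V -> R) :
  \sum_(z in cnbhd e x) F z = F x + \sum_v (e x v)%:R * F v.
Proof.
rewrite cnbhdE big_setU1 ?inE ?e_irr //= sum_indicator.
by congr (_ + _); apply: eq_bigl => v; rewrite inE.
Qed.

Lemma nzeros_ge0 eta : 0 <= nzeros eta.
Proof. by apply: sumr_ge0 => z _; apply: zero_ind_ge0. Qed.

Lemma zdeg_ge0 eta u : 0 <= zdeg eta u.
Proof. by apply: sumr_ge0 => v _; rewrite mulr_ge0 ?zero_ind_ge0. Qed.

Lemma zdeg_le_deg eta u : zdeg eta u <= deg u.
Proof.
apply: ler_sum => v _.
by rewrite -[X in _ <= X]mulr1 ler_wpM2l ?zero_ind_le1.
Qed.

Lemma zpairs_ge0 eta : 0 <= zpairs eta.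
Proof. by apply: sumr_ge0 => u _; rewrite mulr_ge0 ?zero_ind_ge0 ?zdeg_ge0. Qed.

Lemma zpairs_le eta : zpairs eta <= d%:R * nzeros eta.
Proof.
rewrite mulr_sumr; apply: ler_sum => u _; rewrite mulrC ler_wpM2r ?zero_ind_ge0 //.
exact: le_trans (zdeg_le_deg eta u) (deg_le u).
Qed.

Lemma sum_zero_edges eta u :
  \sum_v (e u v)%:R * (zero_ind eta u * zero_ind eta v) = zero_ind eta u * zdeg eta u.
Proof. by rewrite mulr_sumr; apply: eq_bigr => v _; rewrite mulrCA. Qed.

Lemma zero_edges_sym eta u v :
  (e u v)%:R * (zero_ind eta u * zero_ind eta v)
  = (e v u)%:R * (zero_ind eta v * zero_ind eta u).
Proof. by rewrite e_sym mulrC [_ * (e _ _)%:R]mulrC [zero_ind _ _ * _]mulrC. Qed.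

Lemma zpairs_touching_le T eta :
  zpairs_touching T eta <= 2 * \sum_(u in T) zero_ind eta u * zdeg eta u.
Proof.
apply: le_trans (_ : _ <= \sum_u \sum_v ((u \in T)%:R + (v \in T)%:R)
                     * ((e u v)%:R * (zero_ind eta u * zero_ind eta v))) _.
  apply: ler_sum => u _; apply: ler_sum => v _.
  rewrite ler_wpM2r ?mulr_ge0 ?zero_ind_ge0 //.
  by case: (u \in T); case: (v \in T) => /=; lra.
rewrite sum_sym_weight; last exact: zero_edges_sym.
rewrite (sum_indicator (mem T)); under eq_bigr do rewrite sum_zero_edges.
exact: lexx.
Qed.

Lemma zpairs_touching_ge (T : {set V}) eta x : x \in T ->
  2 * (zero_ind eta x * zdeg eta x) <= zpairs_touching T eta.
Proof.
move=> xT; rewrite -sum_zero_edges.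
have -> : \sum_v (e x v)%:R * (zero_ind eta x * zero_ind eta v) =
    \sum_u (u == x)%:R * \sum_v (e u v)%:R * (zero_ind eta u * zero_ind eta v).
  rewrite [RHS](bigD1 x) //= eqxx mul1r [X in _ = _ + X]big1 ?addr0 // => u /negbTE ->.
  by rewrite mul0r.
rewrite -sum_sym_weight; last exact: zero_edges_sym.
apply: ler_sum => u _; apply: ler_sum => v _.
case euv: (e u v); last by rewrite !mul0r !mulr0.
have neq : u != v by apply: contraTneq euv => ->; rewrite e_irr.
rewrite ler_wpM2r ?mulr_ge0 ?zero_ind_ge0 //.
case: (eqVneq u x) neq => [-> | _] neq.
  by rewrite xT eq_sym (negbTE neq) /=; lra.
by case: (eqVneq v x) => [->|_]; rewrite ?xT ?orbT /= ?add0r ?ler0n.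
Qed.

Lemma zpairs_touching_ge0 T eta : 0 <= zpairs_touching T eta.
Proof.
apply: sumr_ge0 => u _; apply: sumr_ge0 => v _.
by rewrite !mulr_ge0 ?zero_ind_ge0.
Qed.

Lemma zpairs_sub_touching T eta xi : agree_off T eta xi ->
  zpairs xi - zpairs eta = zpairs_touching T xi - zpairs_touching T eta.
Proof.
move=> agree.
pose rest c := \sum_u \sum_v (~~ ((u \in T) || (v \in T)))%:R
                            * ((e u v)%:R * (zero_ind c u * zero_ind c v)).
have split c : zpairs c = zpairs_touching T c + rest c.
  rewrite -big_split; apply: eq_bigr => u _; rewrite -sum_zero_edges -big_split.
  by apply: eq_bigr => v _; case: (_ || _); rewrite /= ?mul1r ?mul0r ?addr0 ?add0r.
rewrite !split; have -> : rest xi = rest eta.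
  apply: eq_bigr => u _; apply: eq_bigr => v _.
  case: (boolP (u \in T)) => uT; case: (boolP (v \in T)) => vT; rewrite /= ?mul0r //.
  by rewrite /zero_ind (agree u uT) (agree v vT).
by ring.
Qed.

Lemma zero_ind_sub_abs eta xi z : `|zero_ind xi z - zero_ind eta z| <= 1.
Proof.
have := zero_ind_ge0 xi z; have := zero_ind_le1 xi z.
have := zero_ind_ge0 eta z; have := zero_ind_le1 eta z.
by rewrite ler_norml; lra.
Qed.

Lemma nzeros_sub x eta xi : agree_off (cnbhd e x) eta xi ->
  nzeros xi - nzeros eta = \sum_(z in cnbhd e x) (zero_ind xi z - zero_ind eta z).
Proof.
move=> agree; rewrite /nzeros -sumrB (bigID (mem (cnbhd e x))) /=.
by rewrite [X in _ + X]big1 ?addr0 // => z zN; rewrite /zero_ind (agree z zN) subrr.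
Qed.

Lemma nzeros_sub_abs x eta xi : agree_off (cnbhd e x) eta xi ->
  `|nzeros xi - nzeros eta| <= D.
Proof.
move=> /nzeros_sub ->; apply: le_trans (ler_norm_sum _ _ _) _.
apply: le_trans (card_cnbhd_le x); rewrite -sumr_const.
by apply: ler_sum => z _; apply: zero_ind_sub_abs.
Qed.

Lemma nbhd_zpairs_le x eta : nbhd_zpairs x eta <= D * d%:R.
Proof.
apply: le_trans (_ : \sum_(u in cnbhd e x) d%:R <= _).
  apply: ler_sum => u _; rewrite -[X in _ <= X]mul1r.
  by rewrite ler_pM ?zero_ind_ge0 ?zdeg_ge0 ?zero_ind_le1 // (le_trans (zdeg_le_deg _ _)) ?deg_le.
by rewrite sumr_const -[d%:R *+ _]mulr_natl ler_wpM2r // card_cnbhd_le.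
Qed.

Lemma zpairs_sub_ge x eta xi : agree_off (cnbhd e x) eta xi ->
  2 * (zero_ind xi x * zdeg xi x) - 2 * nbhd_zpairs x eta <= zpairs xi - zpairs eta.
Proof.
move=> /zpairs_sub_touching ->; apply: lerB; first by apply: zpairs_touching_ge; rewrite !inE eqxx.
exact: zpairs_touching_le.
Qed.

Lemma zpairs_sub_abs x eta xi : agree_off (cnbhd e x) eta xi ->
  `|zpairs xi - zpairs eta| <= 2 * (D * d%:R).
Proof.
move=> /zpairs_sub_touching ->.
have bound c : zpairs_touching (cnbhd e x) c <= 2 * (D * d%:R).
  by apply: le_trans (zpairs_touching_le _ _) _; rewrite ler_pM2l ?nbhd_zpairs_le.
have := bound xi; have := bound eta.
have := zpairs_touching_ge0 (cnbhd e x) xi; have := zpairs_touching_ge0 (cnbhd e x) eta.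
by rewrite ler_norml; lra.
Qed.

Definition lyap (eta : cfg) : R := 2 * D * nzeros eta - zpairs eta.

Lemma nzeros_le_lyap eta : nzeros eta <= lyap eta.
Proof.
have := zpairs_le eta; have := nzeros_ge0 eta; have : 0 <= d%:R :> R by [].
by rewrite /lyap -natr1; nra.
Qed.

Lemma lyap_le eta : lyap eta <= 2 * D * nzeros eta.
Proof. by rewrite /lyap lerBlDr lerDl zpairs_ge0. Qed.

Lemma lyap_sub_abs x eta xi : agree_off (cnbhd e x) eta xi ->
  `|lyap xi - lyap eta| <= jump_bound R d.
Proof.
move=> agree; have dn := nzeros_sub_abs agree; have dz := zpairs_sub_abs agree.
have -> : lyap xi - lyap eta
          = 2 * D * (nzeros xi - nzeros eta) - (zpairs xi - zpairs eta).
  by rewrite /lyap; ring.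
apply: le_trans (ler_normB _ _) _; rewrite /jump_bound normrM ger0_norm ?mulr_ge0 //.
by apply: lerD => //; rewrite expr2 mulrA ler_wpM2l // mulr_ge0.
Qed.

Lemma sum_resample_sub_zero x eta z : z \in cnbhd e x ->
  \sum_xi resample x eta xi * (zero_ind xi z - zero_ind eta z) = q - zero_ind eta z.
Proof.
move=> zN; under eq_bigr do rewrite mulrBr.
by rewrite sumrB -mulr_suml sum_resample mul1r sum_resample_zero.
Qed.

Lemma resample_nzeros x eta :
  \sum_xi resample x eta xi * (nzeros xi - nzeros eta)
  = q * (deg x + 1) - (zero_ind eta x + zdeg eta x).
Proof.
rewrite (eq_sum_resample
  (G := fun xi => \sum_(z in cnbhd e x) (zero_ind xi z - zero_ind eta z)));
  last by move=> xi; apply: nzeros_sub.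
under eq_bigr do rewrite mulr_sumr.
rewrite exchange_big /= (eq_bigr (fun z => q - zero_ind eta z)) => [|z zN]; last first.
  exact: sum_resample_sub_zero.
rewrite sumrB sumr_const sum_cnbhd -[q *+ _]mulr_natl card_cnbhd.
by rewrite mulrC.
Qed.

Lemma resample_zero_zdeg x eta :
  \sum_xi resample x eta xi * (zero_ind xi x * zdeg xi x) = q ^+ 2 * deg x.
Proof.
under eq_bigr do rewrite -sum_zero_edges mulr_sumr.
rewrite exchange_big /deg mulr_sumr; apply: eq_bigr => v _.
case exv: (e x v); last by rewrite mulr0 big1 // => xi _; rewrite mul0r mulr0.
have xv : x != v by apply: contraTneq exv => <-; rewrite e_irr.
rewrite mulr1 -(@sum_resample_zero2 x eta x v) ?inE ?eqxx ?exv ?orbT //.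
by apply: eq_bigr => xi _; rewrite mul1r.
Qed.

Lemma resample_zpairs_ge x eta :
  2 * (q ^+ 2 * deg x) - 2 * nbhd_zpairs x eta
  <= \sum_xi resample x eta xi * (zpairs xi - zpairs eta).
Proof.
have <- : \sum_xi resample x eta xi
           * (2 * (zero_ind xi x * zdeg xi x) - 2 * nbhd_zpairs x eta)
          = 2 * (q ^+ 2 * deg x) - 2 * nbhd_zpairs x eta.
  under eq_bigr do rewrite mulrBr mulrCA.
  by rewrite sumrB -mulr_sumr -mulr_suml sum_resample mul1r resample_zero_zdeg.
by apply: ler_sum_resample => xi; apply: zpairs_sub_ge.
Qed.

Lemma resample_lyap_le x eta :
  \sum_xi resample x eta xi * (lyap xi - lyap eta)
  <= 2 * D * (q * (deg x + 1) - (zero_ind eta x + zdeg eta x))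
     - 2 * (q ^+ 2 * deg x) + 2 * nbhd_zpairs x eta.
Proof.
have -> : \sum_xi resample x eta xi * (lyap xi - lyap eta)
   = 2 * D * \sum_xi resample x eta xi * (nzeros xi - nzeros eta)
     - \sum_xi resample x eta xi * (zpairs xi - zpairs eta).
  by rewrite mulr_sumr -sumrB; apply: eq_bigr => xi _; rewrite /lyap; ring.
by rewrite resample_nzeros; have := resample_zpairs_ge x eta; lra.
Qed.

Lemma sum_nbhd_zpairs eta :
  \sum_x zero_ind eta x * nbhd_zpairs x eta <= D * zpairs eta.
Proof.
have -> : \sum_x zero_ind eta x * nbhd_zpairs x eta =
    \sum_u (\sum_x (u \in cnbhd e x)%:R * zero_ind eta x) * (zero_ind eta u * zdeg eta u).
  under eq_bigr => x _ do rewrite /nbhd_zpairs -(sum_indicator (mem (cnbhd e x))) mulr_sumr.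
  rewrite exchange_big /=; apply: eq_big => // u _.
  by rewrite mulr_suml; apply: eq_big => // x _; ring.
rewrite /zpairs mulr_sumr; apply: ler_sum => u _.
rewrite ler_wpM2r ?mulr_ge0 ?zero_ind_ge0 ?zdeg_ge0 //.
apply: le_trans (card_cnbhd_le u); rewrite card_sum_indicator.
apply: ler_sum => x _; rewrite [u \in _]inE [x \in _]inE eq_sym e_sym.
by rewrite -[X in _ <= X]mulr1 ler_wpM2l ?zero_ind_le1.
Qed.

Lemma lyap_drift eta :
  \sum_x zero_ind eta x * \sum_xi resample x eta xi * (lyap xi - lyap eta)
  <= - drift_gap R d * nzeros eta.
Proof.
pose c x := 2 * D * (q * (deg x + 1) - 1) - 2 * (q ^+ 2 * deg x).
have step x : zero_ind eta x * \sum_xi resample x eta xi * (lyap xi - lyap eta)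
    <= zero_ind eta x * c x - 2 * D * (zero_ind eta x * zdeg eta x)
       + 2 * (zero_ind eta x * nbhd_zpairs x eta).
  apply: le_trans (ler_wpM2l (zero_ind_ge0 eta x) (resample_lyap_le x eta)) _.
  by rewrite /c /zero_ind; case: (eta x) => /=; lra.
have sum_c : \sum_x zero_ind eta x * c x <= - drift_gap R d * nzeros eta.
  rewrite /nzeros mulr_sumr; apply: ler_sum => x _.
  rewrite mulrC ler_wpM2r ?zero_ind_ge0 //; apply: drift_coef_le_gap => //.
    by have := p_lt1; have := q_le_crit; lra.
  by rewrite deg_ge0 deg_le.
apply: le_trans (ler_sum _ (fun x _ => step x)) _.
(* The pair terms cancel: this is what the weight 2 D of N0 in [lyap] is for. *)
have := sum_nbhd_zpairs eta; have := zpairs_ge0 eta.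
rewrite big_split sumrB /= -!mulr_sumr /zpairs; lra.
Qed.

Definition lyap_exp (eta : cfg) : R := expR (exp_rate R d * lyap eta).

(* Every clock is active at the all-ones configuration, where [lyap_exp] would
   increase; [all_ones_value] dominates [lyap_exp] on all its successors. *)
Definition lyap_mod (eta : cfg) : R :=
  if [forall y, eta y] then all_ones_value R d else lyap_exp eta.

Lemma exp_rate_ge0 : 0 <= exp_rate R d.
Proof. exact: ltW (exp_rate_gt0 R d_gt0). Qed.

Lemma expR_nzeros_le eta : expR (exp_rate R d * nzeros eta) <= lyap_exp eta.
Proof. by rewrite ler_expR ler_wpM2l ?exp_rate_ge0 ?nzeros_le_lyap. Qed.

Lemma lyap_exp_ge1 eta : 1 <= lyap_exp eta.
Proof.
apply: le_trans (expR_nzeros_le eta); rewrite -expR0 ler_expR.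
by rewrite mulr_ge0 ?exp_rate_ge0 ?nzeros_ge0.
Qed.

Lemma lyap_mod_le eta : lyap_mod eta <= lyap_exp eta + (all_ones_value R d - 1).
Proof.
have := lyap_exp_ge1 eta; have := all_ones_value_ge1 R d_gt0.
by rewrite /lyap_mod; case: forallP => _; lra.
Qed.

Lemma resample_lyap_exp_le x eta :
  \sum_xi resample x eta xi * (lyap_exp xi - lyap_exp eta)
  <= lyap_exp eta * (exp_rate R d * \sum_xi resample x eta xi * (lyap xi - lyap eta)
                     + decay_const R d).
Proof.
apply: le_trans (ler_sum_resample (G := fun xi => lyap_exp eta
         * (exp_rate R d * (lyap xi - lyap eta) + decay_const R d)) _) _.
  move=> xi /lyap_sub_abs jump; set t := exp_rate R d * (lyap xi - lyap eta).
  have : `|t| <= exp_rate R d * jump_bound R d.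
    by rewrite normrM ger0_norm ?exp_rate_ge0 // ler_wpM2l ?exp_rate_ge0.
  rewrite ler_norml => /andP [t_ge t_le].
  have exp_le := expR_le_quadratic (le_trans t_le (exp_rate_jump_le R d_gt0)).
  have -> : lyap_exp xi - lyap_exp eta = lyap_exp eta * (expR t - 1).
    by rewrite mulrBr mulr1 /lyap_exp -expRD /t; congr (expR _ - _); ring.
  rewrite ler_wpM2l ?expR_ge0 // -(exp_rate_jump_sqr R d_gt0); nra.
have -> : \sum_xi resample x eta xi
            * (lyap_exp eta * (exp_rate R d * (lyap xi - lyap eta) + decay_const R d))
   = lyap_exp eta * (exp_rate R d * \sum_xi resample x eta xi * (lyap xi - lyap eta)
                     + decay_const R d * \sum_xi resample x eta xi).
  by rewrite !mulr_sumr -big_split mulr_sumr; apply: eq_bigr => xi _ /=; ring.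
by rewrite sum_resample mulr1.
Qed.

Lemma nzeros_all_ones (eta : cfg) : [forall y, eta y] -> nzeros eta = 0.
Proof. by move=> /forallP all1; rewrite /nzeros big1 // => z _; rewrite /zero_ind all1. Qed.

Lemma generator_all_ones (eta : cfg) : [forall y, eta y] ->
  \sum_xi bs_rate e p eta xi * (lyap_mod xi - lyap_mod eta) <= 0.
Proof.
move=> all1; apply: sumr_le0 => xi _; rewrite bs_rateE mulr_suml.
apply: sumr_le0 => x _; case: bs_active; last by rewrite mul0r.
have [->|/resample_agree_off agree] := eqVneq (resample x eta xi) 0; first by rewrite mul0r.
rewrite mulr_ge0_le0 ?resample_ge0 // subr_le0 {2}/lyap_mod all1 /lyap_mod.
case: forallP => // _; rewrite /lyap_exp ler_expR ler_wpM2l ?exp_rate_ge0 //.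
apply: le_trans (lyap_le xi) _; rewrite expr2 mulrA ler_wpM2l ?mulr_ge0 //.
have := nzeros_sub_abs agree; rewrite (nzeros_all_ones all1) subr0 ger0_norm //.
exact: nzeros_ge0.
Qed.

Lemma generator_resampleE (eta : cfg) (h : cfg -> R) : ~~ [forall y, eta y] ->
  \sum_xi bs_rate e p eta xi * (h xi - h eta)
  = \sum_x zero_ind eta x * \sum_xi resample x eta xi * (h xi - h eta).
Proof.
move=> not_all1; under eq_bigr => xi _ do rewrite bs_rateE mulr_suml.
rewrite exchange_big /=; apply: eq_big => // x _; rewrite mulr_sumr.
apply: eq_big => // xi _; rewrite /bs_active (negbTE not_all1) orbF /zero_ind.
by case: (eta x); rewrite /= ?mul0r ?mul1r.
Qed.

Lemma generator_lyap_mod_le eta :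
  \sum_xi bs_rate e p eta xi * (lyap_mod xi - lyap_mod eta)
  <= - nzeros eta * (decay_const R d * lyap_exp eta - (all_ones_value R d - 1)).
Proof.
have [all1 | not_all1] := boolP [forall y, eta y].
  by rewrite nzeros_all_ones // oppr0 mul0r generator_all_ones.
rewrite generator_resampleE // {2}/lyap_mod (negbTE not_all1).
set f := lyap_exp eta; set c := decay_const R d; set b := all_ones_value R d - 1.
pose E x := \sum_xi resample x eta xi * (lyap xi - lyap eta).
have step x : \sum_xi resample x eta xi * (lyap_mod xi - f)
              <= f * (exp_rate R d * E x + c) + b.
  apply: le_trans (_ : \sum_xi resample x eta xi * (lyap_exp xi - f + b) <= _).
    apply: ler_sum => xi _; rewrite ler_wpM2l ?resample_ge0 //.
    by have := lyap_mod_le xi; rewrite -/b; lra.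
  under eq_bigr do rewrite mulrDr.
  by rewrite big_split /= -mulr_suml sum_resample mul1r lerD2r resample_lyap_exp_le.
apply: le_trans (_ : \sum_x zero_ind eta x * (f * (exp_rate R d * E x + c) + b) <= _).
  by apply: ler_sum => x _; rewrite ler_wpM2l ?zero_ind_ge0.
have -> : \sum_x zero_ind eta x * (f * (exp_rate R d * E x + c) + b)
          = f * exp_rate R d * (\sum_x zero_ind eta x * E x) + (f * c + b) * nzeros eta.
  by rewrite /nzeros !mulr_sumr -big_split; apply: eq_bigr => x _ /=; ring.
have f_ge0 : 0 <= f by apply: expR_ge0.
have := ler_wpM2l (mulr_ge0 f_ge0 exp_rate_ge0) (lyap_drift eta).
by rewrite /E /c /decay_const; lra.
Qed.

Lemma stationary_moment_le (pi : {ffun cfg -> R}) : bs_stationary e p pi ->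
  \sum_eta pi eta * (nzeros eta * lyap_exp eta) <= tail_const R d.
Proof.
move=> [pi_ge0 [pi_sum1 balance]].
have c_gt0 := decay_const_gt0 R d_gt0.
set c := decay_const R d; set b := all_ones_value R d - 1.
have gen0 := balance_generator_sum0 lyap_mod balance.
have drift : \sum_eta pi eta * (nzeros eta * (c * lyap_exp eta - b)) <= 0.
  rewrite -oppr_ge0 -sumrN -[X in X <= _]gen0; apply: ler_sum => eta _.
  by rewrite -mulrN ler_wpM2l // -mulNr generator_lyap_mod_le.
have : \sum_eta pi eta * (c / 2 * (nzeros eta * lyap_exp eta) - moment_const R d) <= 0.
  apply: le_trans drift; apply: ler_sum => eta _; rewrite ler_wpM2l //.
  apply: quadratic_absorb; rewrite ?nzeros_ge0 ?exp_rate_gt0 //.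
  exact: le_trans (expR_ge1Dx _) (expR_nzeros_le eta).
under eq_bigr do rewrite mulrBr mulrCA.
rewrite sumrB -mulr_sumr -mulr_suml pi_sum1 mul1r subr_le0 => moment.
by rewrite /tail_const ler_pdivlMr // -/c; lra.
Qed.

Lemma bs_tail_le (pi : {ffun cfg -> R}) : bs_stationary e p pi -> forall k : nat,
  \sum_(eta : cfg | (k < #|[set x | ~~ eta x]|)%N) pi eta
  <= tail_const R d * expR (- (exp_rate R d * k%:R)).
Proof.
move=> st k; have pi_ge0 : forall eta, 0 <= pi eta by case: st.
apply: le_trans (sum_le_markov (W := fun eta => nzeros eta * lyap_exp eta)
                   (expR_gt0 (exp_rate R d * k%:R)) pi_ge0 _ _) _.
- by move=> eta; rewrite mulr_ge0 ?nzeros_ge0 ?expR_ge0.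
- move=> eta k_lt /=; have n_ge : k%:R + 1 <= nzeros eta by rewrite -nzerosE natr1 ler_nat.
  have : expR (exp_rate R d * k%:R) <= expR (exp_rate R d * nzeros eta).
    by rewrite ler_expR ler_wpM2l ?exp_rate_ge0 //; lra.
  have k_ge0 : 0 <= k%:R :> R by [].
  by have := expR_nzeros_le eta; have := lyap_exp_ge1 eta; nra.
by rewrite expRN mulrC ler_wpM2r ?invr_ge0 ?expR_ge0 // stationary_moment_le.
Qed.

End BakSneppen.

Lemma card_nbrs_le_max_degree (V : finType) (e : rel V) x :
  (#|[set y | e x y]| <= max_degree e)%N.
Proof. exact: (le_bigmax _ (fun x => #|[set y | e x y]|) x). Qed.

Theorem theorem3 (R : realType) (d : nat) (hd : (1 <= d)%N) :
  exists q0 c1 c2 : R,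
    1 / (d%:R + 1) < q0 /\ 0 < c1 /\ 0 < c2 /\
    forall (V : finType) (e : rel V),
      simple_graph e -> connected_graph e -> max_degree e = d ->
      forall p : R, 0 < p < 1 -> 1 - p <= q0 ->
      forall pi : {ffun {ffun V -> bool} -> R},
        bs_stationary e p pi ->
        forall k : nat,
          \sum_(eta : {ffun V -> bool} | (k < #|[set x | ~~ eta x]|)%N) pi eta
            <= c1 * expR (- (c2 * k%:R)).
Proof.
exists (q_crit R d), (tail_const R d), (exp_rate R d).
split; first exact: q_crit_gt.
split; first exact: tail_const_gt0.
split; first exact: exp_rate_gt0.
move=> V e [e_sym e_irr] _ max_deg p /andP [p_gt0 p_lt1] q_le pi st k.
have card_nbrs_le x : (#|[set y | e x y]| <= d)%N.
  by rewrite -max_deg card_nbrs_le_max_degree.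
exact: (bs_tail_le e_sym e_irr card_nbrs_le hd p_gt0 p_lt1 q_le st).
Qed.
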